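(* Let $\mu,\gamma,\eta$ be vertices of $\Gamma$ and $\varphi_\eta=\varphi^{[\mu,\gamma]}_\eta$. Then $\varphi_\eta(\nu)\ge0$ for every vertex $\nu$, with $\varphi_\eta(\nu)>0$ if and only if $\nu\in\Gamma^\mu_\gamma$. If $\nu,\nu'\in[\mu,\gamma]$ and $d(\mu,\nu)<d(\mu,\nu')$, then $\varphi_\eta(\nu)<\varphi_\eta(\nu')$. Furthermore, if $\eta\in[\mu,\gamma]$, then $\varphi_\eta$ is constant on any path of $\Gamma$ meeting $[\mu,\gamma]$ in at most one vertex.
   Context: Setting: $R$ two-dimensional regular local ring with algebraically closed residue field; $\pi:X=X_{N+1}\to\cdots\to X_1=\operatorname{Spec}R$ a composition of point blowups; $E_\nu$ strict transforms of exceptional divisors; proximity matrix $P$ ($p_{\mu,\mu}=1$, $p_{\mu,\nu}=-1$ if $x_\mu$ lies on the strict transform on $X_\mu$ of the exceptional divisor of the blowup of $x_\nu$, else $0$), valuation matrix $V=(P^TP)^{-1}$ (symmetric, positive entries). Dual graph $\Gamma$ on vertices $1..N$, $\gamma\sim\eta$ iff $\gamma\ne\eta$ and $E_\gamma\cap E_\eta\neq\emptyset$ (a tree); $[\mu,\gamma]$ the path from $\mu$ to $\gamma$; $d$ the graph distance; branch $\Gamma^\mu_\gamma$ = maximal connected subgraph containing $\gamma$ but not $\mu$ ($\Gamma^\mu_\mu=\emptyset$). $\mathbf 1_i$ standard basis vector of $\mathbb Q^\Gamma$; $\rho_{[\alpha,\beta]}(\nu)=V_{\beta,\nu}/V_{\alpha,\nu}$;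 $\widehat r_{[\mu,\gamma]}=\mathbf 1_\gamma-\rho_{[\mu,\gamma]}(\mu)\mathbf 1_\mu$; $\varphi^{[\mu,\gamma]}_\eta(\nu)=(\widehat r_{[\mu,\gamma]}V)_\nu/V_{\eta,\nu}$. *)

(* Combinatorial model of a sequence of point blowups. *)
From HB Require Import structures.
From mathcomp Require Import all_boot all_order all_algebra.
Set Implicit Arguments. Unset Strict Implicit. Unset Printing Implicit Defensive.
Import Order.TTheory GRing.Theory Num.Theory.
Local Open Scope ring_scope.

(* Vertices / blown-up points are indexed 0..N-1 (paper: 1..N).
   [prox k i] means: the point x_k lies on the strict transform (on X_k) of
   the exceptional divisor of the blowup of x_i  (x_k is proximate to x_i). *)

(* Dual graph of the exceptional divisors after blowing up x_0..x_{k-1}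
   (vertices < k).  Blowing up x_k adds vertex k, joined to the divisors
   through x_k; if x_k is the intersection of two divisors, their edge
   disappears (they are separated). *)
Fixpoint adjk (prox : nat -> nat -> bool) (k : nat) (i j : nat) : bool :=
  match k with
  | 0 => false
  | k'.+1 =>
      if (i < k')%N && (j < k')%N then adjk prox k' i j && ~~ (prox k' i && prox k' j)
      else if (i == k') && (j < k')%N then prox k' j
      else if (j == k') && (i < k')%N then prox k' i
      else false
  end.

(* Proximity data realizable by a sequence of point blowups of Spec R:
   x_k is proximate only to earlier points; for k >= 1 the point x_k lies
   over the closed point, hence on one or two exceptional divisors, and if on
   two, it is their intersection point (they are adjacent). *)
Definition valid_prox (N : nat) (prox : nat -> nat -> bool) : Prop :=
  (forall k i, (k < N)%N -> prox k i -> (i < k)%N) /\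
  (forall k, (0 < k < N)%N ->
     (0 < count (prox k) (iota 0 k) <= 2)%N /\
     (forall i j, i != j -> prox k i -> prox k j -> adjk prox k i j)).

Definition proxmx (N : nat) (prox : nat -> nat -> bool) : 'M[rat]_N :=
  \matrix_(i < N, j < N)
     (if i == j then 1 else if prox i j then -1 else 0).

Definition valmx (N : nat) (prox : nat -> nat -> bool) : 'M[rat]_N :=
  invmx ((proxmx N prox)^T *m proxmx N prox).

Definition gadj (N : nat) (prox : nat -> nat -> bool) : rel 'I_N :=
  fun i j => adjk prox N i j.

Fixpoint reach (N : nat) (e : rel 'I_N) (n : nat) (i j : 'I_N) : bool :=
  match n with
  | 0 => i == j
  | n'.+1 => (i == j) || [exists k, e i k && reach e n' k j]
  end.

(* Graph distance d(i,j) (= N if unreachable, which never happens for a tree). *)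
Definition gdist (N : nat) (e : rel 'I_N) (i j : 'I_N) : nat :=
  find (fun n => reach e n i j) (iota 0 N).

(* Vertices on the (unique, since Gamma is a tree) path [a,b]. *)
Definition onpath (N : nat) (e : rel 'I_N) (a b v : 'I_N) : Prop :=
  exists p : seq 'I_N,
    [&& path e a p, last a p == b, uniq (a :: p) & v \in a :: p].

(* Branch Gamma^mu_gamma: the connected component of gamma in Gamma minus mu;
   empty if gamma = mu. *)
Definition branch (N : nat) (e : rel 'I_N) (mu g v : 'I_N) : bool :=
  (g != mu) && connect [rel x y | [&& e x y, x != mu & y != mu]] g v.

Definition rho (N : nat) (V : 'M[rat]_N) (a b nu : 'I_N) : rat := V b nu / V a nu.

Definition rhat (N : nat) (V : 'M[rat]_N) (mu g : 'I_N) : 'rV[rat]_N :=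
  \row_i ((i == g)%:R - rho V mu g mu * (i == mu)%:R).

Definition phi (N : nat) (V : 'M[rat]_N) (mu g eta nu : 'I_N) : rat :=
  (rhat V mu g *m V) 0 nu / V eta nu.

(* The intersection matrix A = P^T P of the exceptional divisors is -1 on the edges of
   the dual graph and 0 elsewhere off the diagonal, and positive definite; V = A^-1 equals
   Q Q^T with Q = P^-1 >= 0, so V has positive entries. Each blowup either attaches a leaf
   or subdivides an edge, so every edge of the dual graph is a bridge.
   The numerator w = rhat V of phi satisfies w A = 1_gamma - rho 1_mu and w_mu = 0, so the
   discrete minimum principle for A makes w vanish off the branch and positive on it.
   Comparing w with multiples k V_eta of a row of V, harmonic away from eta, gives the
   strict growth along [mu, gamma] (k = phi(nu'), on the component of mu in Gamma - nu')
   and the equality phi(a) = phi(b) across any edge whose far side avoids mu, gamma, eta. *)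
From HB Require Import structures.
From mathcomp Require Import all_boot all_order all_algebra.
From mathcomp Require Import zify lra.
Set Implicit Arguments. Unset Strict Implicit. Unset Printing Implicit Defensive.
Import Order.TTheory GRing.Theory Num.Theory.
Local Open Scope ring_scope.

(* [branch e mu g] unfolds to [(g != mu) && connect (avoid e mu) g]. *)
Definition avoid (T : finType) (e : rel T) (a : T) : rel T :=
  [rel x y | [&& e x y, x != a & y != a]].

Definition deledge (T : finType) (e : rel T) (x y : T) : rel T :=
  [rel u v | e u v && ~~ (((u == x) && (v == y)) || ((u == y) && (v == x)))].

Lemma path_const (T : eqType) (U : Type) (F : T -> U) (O : T -> Prop) (r : rel T) :
  (forall a b, r a b -> ~ (O a /\ O b) -> F a = F b) ->
  forall x p, path r x p -> uniq (x :: p) ->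
  (forall u v, u \in x :: p -> v \in x :: p -> O u -> O v -> u = v) ->
  {in x :: p, forall y, F y = F x}.
Proof.
move=> HF x p; elim: p x => [|z p IH] x /=; first by move=> _ _ _ y; rewrite inE => /eqP->.
case/andP=> rxz hp /andP[xn hu] Hone.
have Fxz : F x = F z.
  apply: (HF x z rxz) => -[Ox Oz]; move: xn; rewrite (Hone x z) ?mem_head ?inE ?eqxx ?orbT //.
move=> y; rewrite inE => /orP[/eqP->//|hy]; rewrite Fxz; apply: IH => // u v hu' hv'.
by apply: Hone; rewrite inE ?hu' ?hv' orbT.
Qed.

Section Connect.

Variables (T : finType) (e : rel T).

Lemma connect_map (e' : rel T) (f : T -> T) :
  (forall u v, e u v -> connect e' (f u) (f v)) ->
  forall x y, connect e x y -> connect e' (f x) (f y).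
Proof.
move=> H x y /connectP[p]; elim: p x => [|z p IH] x /=; first by move=> _ ->.
by case/andP=> exz hp hy; apply: connect_trans (H _ _ exz) (IH _ hp hy).
Qed.

Lemma connect_avoid_to a x : connect (avoid e a) x a -> x = a.
Proof.
case/connectP=> p; elim: p x => [|y p IH] x //= /andP[/and3P[_ _ ya] hp] hl.
by move: ya; rewrite (IH y hp hl) eqxx.
Qed.

Lemma path_avoid_connect a x p : path e x p -> {in x :: p, forall u, u != a} ->
  {in x :: p, forall v, connect (avoid e a) x v}.
Proof.
move=> hp ha; apply: path_connect.
elim: p x hp ha => [|y p IH] x //= /andP[exy hp] ha.
rewrite /avoid /= exy (ha x) ?(ha y) ?inE ?eqxx ?orbT //=.
by apply: IH => // u hu; apply: ha; rewrite inE hu orbT.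
Qed.

Lemma connect_avoid_boundary a b t z : b != a ->
  connect (avoid e a) b t -> ~~ connect (avoid e a) b z -> e t z -> z = a.
Proof.
move=> ba hbt hbz etz; apply/eqP; apply: contraNT hbz => za.
have ta : t != a by apply: contraNneq ba => ta; rewrite ta in hbt; apply/eqP/connect_avoid_to.
by apply: connect_trans hbt (connect1 _); rewrite /avoid /= etz ta.
Qed.

Hypothesis e_sym : symmetric e.

Lemma avoid_sym a : symmetric (avoid e a).
Proof. by move=> x y; rewrite /avoid /= e_sym (andbC (x != a)). Qed.

Lemma connect_avoid_sym a x y : connect (avoid e a) x y = connect (avoid e a) y x.
Proof. by rewrite (sym_connect_sym (avoid_sym a)). Qed.

Lemma deledge_sym x y : symmetric (deledge e x y).
Proof.
move=> u v; rewrite /deledge /= e_sym orbC.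
by rewrite [(u == x) && _]andbC [(u == y) && _]andbC.
Qed.

Lemma connect_deledge_swap x y :
  connect (deledge e x y) x y = connect (deledge e y x) y x.
Proof.
rewrite (sym_connect_sym (deledge_sym x y)).
by apply: eq_connect => u v; rewrite /deledge /= orbC.
Qed.

End Connect.

Section Forest.

Variables (T : finType) (e : rel T).
Hypothesis e_sym : symmetric e.
Hypothesis e_bridge : forall x y, e x y -> ~~ connect (deledge e x y) x y.

Lemma forest_neq x y : e x y -> x != y.
Proof. by move=> exy; apply: contraTneq (e_bridge exy) => ->; rewrite connect0. Qed.

Lemma connect_avoid_deledge a x y u v : (a == x) || (a == y) ->
  connect (avoid e a) u v -> connect (deledge e x y) u v.
Proof.
move=> ha; apply: (connect_map (f := id)) => {}u {}v /and3P[euv ua va].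
by apply: connect1; case/orP: ha => /eqP <-;
  rewrite /deledge /= euv (negbTE ua) (negbTE va) ?andbF.
Qed.

Lemma neighbours_disconnected a b c :
  e a b -> e a c -> b != c -> ~~ connect (avoid e a) c b.
Proof.
move=> eab eac bc; apply/negP => hc; move/negP: (e_bridge eab); apply.
have hac : connect (deledge e a b) a c.
  apply: connect1; rewrite /deledge /= eac eqxx (negbTE (forest_neq eab)) /=.
  by rewrite orbF eq_sym.
by apply: connect_trans hac (connect_avoid_deledge _ hc); rewrite eqxx.
Qed.

Lemma bridge_sides_disjoint a b v :
  e a b -> connect (avoid e a) b v -> connect (avoid e b) a v -> False.
Proof.
move=> eab hav hbv; move/negP: (e_bridge eab); apply.
rewrite connect_avoid_sym // in hav.
apply: (connect_trans (connect_avoid_deledge _ hbv)); first by rewrite eqxx orbT.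
by apply: connect_avoid_deledge hav; rewrite eqxx.
Qed.

Lemma path_neighbour x p a v : path e x p -> uniq (x :: p) ->
  a \in x :: p -> v \in x :: p -> v != a ->
  exists a', [/\ a' \in x :: p, e a a' & connect (avoid e a) v a'].
Proof.
elim: p x v => [|y p IH] x v /=; first by move=> _ _; rewrite !inE => /eqP-> /eqP->; rewrite eqxx.
case/andP=> exy hp /andP[xn hu]; rewrite inE.
case: (eqVneq a x) => [->|ax] /= ha hv va.
  exists y; split; rewrite ?inE ?eqxx ?orbT //.
  rewrite connect_avoid_sym //; apply: (path_avoid_connect hp).
    by move=> u hu'; apply: contraNneq xn => <-.
  by move: hv; rewrite inE (negbTE va).
case: (eqVneq v x) va hv => [-> _ _|vx va hv]; last first.
  have hv' : v \in y :: p by move: hv; rewrite inE (negbTE vx).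
  have [a' [ha' ea' c']] := IH y v hp hu ha hv' va.
  by exists a'; rewrite inE ha' orbT.
case: (eqVneq y a) => [ya|ya].
  by exists x; rewrite inE eqxx -ya e_sym exy connect0.
have [a' [ha' ea' c']] := IH y y hp hu ha (mem_head _ _) ya.
exists a'; split => //; first by rewrite inE ha' orbT.
apply: connect_trans c'; apply: connect1.
by rewrite /avoid /= exy ya andbT eq_sym.
Qed.

Lemma path_separates x p nu : path e x p -> uniq (x :: p) ->
  nu \in p -> nu != last x p -> ~~ connect (avoid e nu) x (last x p).
Proof.
move=> + + nup; case/splitPr: nup => p1 p2.
rewrite cat_path last_cat => /andP[hp1 hp2] hu.
rewrite -cat_cons cat_uniq in hu; case/and3P: hu => _ hdis hu2.
case: p2 hp2 hdis hu2 => [|a2 p2]; first by rewrite /= eqxx.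
case/andP=> e1 /andP[e2 hp2] hdis /andP[nup2 _] _; apply/negP => hc.
have nu1 : {in x :: p1, forall u, u != nu}.
  by move=> u hu; apply: contraNneq hdis => eu; apply/hasP; exists u; rewrite // eu mem_head.
have nu2 : {in a2 :: p2, forall u, u != nu} by move=> u hu; apply: contraNneq nup2 => <-.
have c1 := path_avoid_connect hp1 nu1 (mem_last x p1).
have c2 := path_avoid_connect hp2 nu2 (mem_last a2 p2).
have a12 : a2 != last x p1.
  apply: contraNneq hdis => ea; apply/hasP; exists a2.
    by rewrite !inE eqxx orbT.
  by rewrite ea mem_last.
have e1' : e nu (last x p1) by rewrite e_sym.
move/negP: (neighbours_disconnected e2 e1' a12); apply.
rewrite connect_avoid_sym // in c1.
by apply: connect_trans c1 (connect_trans hc _); rewrite connect_avoid_sym.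
Qed.

Lemma edge_side_avoids_path x p a b : path e x p -> uniq (x :: p) -> e a b ->
  a \in x :: p -> b \notin x :: p ->
  forall v, connect (avoid e a) b v -> v \notin x :: p.
Proof.
move=> hp hu eab ha hb v hbv; apply/negP => hv.
have va : v != a.
  apply: contraTneq hbv => ->; apply/negP => /connect_avoid_to ba.
  by move: (forest_neq eab); rewrite ba eqxx.
have [a' [ha' eaa' hva']] := path_neighbour hp hu ha hv va.
have a'b : a' != b by apply: contraNneq hb => <-.
by move/negP: (neighbours_disconnected eaa' eab a'b); apply; apply: connect_trans hbv hva'.
Qed.

Lemma edge_off_path_side x p a b : path e x p -> uniq (x :: p) -> e a b ->
  ~~ ((a \in x :: p) && (b \in x :: p)) ->
  (forall v, connect (avoid e a) b v -> v \notin x :: p) \/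
  (forall v, connect (avoid e b) a v -> v \notin x :: p).
Proof.
move=> hp hu eab; case: (boolP (a \in x :: p)) => ha /=.
  by move=> hb; left; apply: edge_side_avoids_path.
case: (boolP (b \in x :: p)) => hb _.
  by right; apply: edge_side_avoids_path; rewrite // e_sym.
have on_path c : c \notin x :: p -> {in x :: p, forall v, connect (avoid e c) x v}.
  by move=> hc; apply: path_avoid_connect hp _ => u hu'; apply: contraNneq hc => <-.
case: (boolP (connect (avoid e a) b x)) => hbx; [right | left] => v hv; apply/negP => vP.
  apply: (bridge_sides_disjoint eab hbx).
  by apply: connect_trans hv _; rewrite connect_avoid_sym // on_path.
by move/negP: hbx; apply; apply: connect_trans hv _; rewrite connect_avoid_sym // on_path.
Qed.

End Forest.

Section Distance.

Variables (N : nat) (e : rel 'I_N).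

Lemma path_reach x p y : path e x p -> y \in x :: p -> reach e (size p) x y.
Proof.
elim: p x => [|z p IH] x /=; first by move=> _; rewrite inE => /eqP->; rewrite eqxx.
case/andP=> exz hp; rewrite inE => /orP[/eqP->|hy]; first by rewrite eqxx.
by apply/orP; right; apply/existsP; exists z; rewrite exz IH.
Qed.

Lemma reach_avoid z n x y : reach e n x y ->
  (exists2 m, (m <= n)%N & reach e m x z) \/ connect (avoid e z) x y.
Proof.
elim: n x => [|n IH] x /=.
  by move/eqP=> <-; case: (eqVneq x z) => [->|]; [left; exists 0%N; rewrite /= ?eqxx | right].
case: (eqVneq x z) => [-> _|xz]; first by left; exists 0%N; rewrite /= ?eqxx.
case/orP=> [/eqP <-|/existsP[k /andP[ek hk]]]; first by right.
case: (eqVneq k z) => [kz|kz].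
  by left; exists 1%N => //=; apply/orP; right; apply/existsP; exists k; rewrite ek kz eqxx.
case: (IH k hk) => [[m hm hr]|hc].
  by left; exists m.+1 => //=; apply/orP; right; apply/existsP; exists k; rewrite ek hr.
by right; apply: connect_trans hc; apply: connect1; rewrite /avoid /= ek xz kz.
Qed.

Lemma gdist_self x : gdist e x x = 0%N.
Proof.
rewrite /gdist; have -> : iota 0 N = 0%N :: iota 1 N.-1 by case: N x => [[]|].
by rewrite /= eqxx.
Qed.

Lemma reach_gdist x y n : (n < N)%N -> reach e n x y -> reach e (gdist e x y) x y.
Proof.
move=> hn hr; have hh : has (fun k => reach e k x y) (iota 0 N).
  by apply/hasP; exists n; rewrite ?mem_iota.
by have := nth_find 0%N hh; rewrite has_find size_iota in hh; rewrite nth_iota.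
Qed.

Lemma reach_lt_gdist x y m : (m < gdist e x y)%N -> reach e m x y = false.
Proof.
move=> h; have := before_find 0%N h.
suff hm : (m < N)%N by rewrite nth_iota.
by apply: leq_trans h _; rewrite -[X in (_ <= X)%N](size_iota 0 N) find_size.
Qed.

Lemma gdist_lt_connect_avoid x p y z : path e x p -> uniq (x :: p) -> y \in x :: p ->
  (gdist e x y < gdist e x z)%N -> connect (avoid e z) x y.
Proof.
move=> hp hu hy hd.
have sizep : (size p < N)%N by move: (max_card (mem (x :: p))); rewrite card_ord (card_uniqP hu).
case: (reach_avoid z (reach_gdist sizep (path_reach hp hy))) => [[m hm hrm]|//].
by move: hrm; rewrite reach_lt_gdist // (leq_ltn_trans hm hd).
Qed.

End Distance.

Section MinimumPrinciple.

Variables (R : realFieldType) (n : nat) (A : 'M[R]_n).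
Hypothesis A_offdiag_le0 : forall z t, z != t -> A z t <= 0.
Hypothesis A_posdef : forall u : 'rV[R]_n, \sum_v u 0 v * (u *m A) 0 v <= 0 -> u = 0.

Lemma superharmonic_ge0 (S : pred 'I_n) (u : 'rV[R]_n) :
  (forall t, S t -> 0 <= (u *m A) 0 t) ->
  (forall t z, S t -> ~~ S z -> A z t != 0 -> 0 <= u 0 z) ->
  forall t, S t -> 0 <= u 0 t.
Proof.
move=> Hharm Hbdry.
pose neg := \row_v (if S v && (u 0 v < 0) then u 0 v else 0).
have negE v : neg 0 v = if S v && (u 0 v < 0) then u 0 v else 0 by rewrite mxE.
have posE v : (u - neg) 0 v = if S v && (u 0 v < 0) then 0 else u 0 v.
  by rewrite !mxE; case: ifP; rewrite ?subrr ?subr0.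
(* Test the quadratic form on the negative part [neg] of u on S: the cross term with
   u - neg is >= 0 because the two supports are disjoint and A is <= 0 off the diagonal. *)
have neg_energy : \sum_v neg 0 v * (neg *m A) 0 v <= 0.
  have -> : \sum_v neg 0 v * (neg *m A) 0 v = \sum_v neg 0 v * (u *m A) 0 v
      - \sum_v \sum_z neg 0 v * ((u - neg) 0 z * A z v).
    rewrite -sumrB; apply: eq_bigr => v _.
    have -> : neg *m A = u *m A - (u - neg) *m A by rewrite -mulmxBl opprB addrC subrK.
    by rewrite !mxE mulrBr !mulr_sumr.
  rewrite subr_le0; apply: (@le_trans _ _ 0).
    apply: sumr_le0 => v _; rewrite negE; case: ifP => [/andP[Sv uv]|_]; last by rewrite mul0r.
    by rewrite mulr_le0_ge0 ?Hharm // ltW.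
  apply: sumr_ge0 => v _; apply: sumr_ge0 => z _.
  rewrite negE; case: ifP => [/andP[Sv uv]|_]; last by rewrite mul0r.
  apply: mulr_le0; first exact: ltW.
  case: (eqVneq z v) => [->|zv]; first by rewrite posE Sv uv mul0r.
  have [->|Anz] := eqVneq (A z v) 0; first by rewrite mulr0.
  rewrite mulr_ge0_le0 ?A_offdiag_le0 // posE.
  case: ifP => // /negbT; rewrite negb_and => /orP[Sz|]; first exact: Hbdry Sv Sz Anz.
  by rewrite -leNgt.
move=> t St; have /matrixP/(_ 0 t) := A_posdef neg_energy.
rewrite negE mxE St /=; case: ifP => [ut ut0|/negbT]; last by rewrite -leNgt.
by move: ut; rewrite ut0 ltxx.
Qed.

Lemma harmonic_eq0 (S : pred 'I_n) (u : 'rV[R]_n) :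
  (forall t, S t -> (u *m A) 0 t = 0) ->
  (forall t z, S t -> ~~ S z -> A z t != 0 -> u 0 z = 0) ->
  forall t, S t -> u 0 t = 0.
Proof.
move=> Hharm Hbdry t St; apply/eqP; rewrite eq_le; apply/andP; split; last first.
  by apply: (superharmonic_ge0 _ _ St) => [t' St'|t' z St' Sz Az]; rewrite ?Hharm ?(Hbdry t' z).
have := superharmonic_ge0 (u := - u) _ _ St; rewrite mxE oppr_ge0; apply.
  by move=> t' St'; rewrite mulNmx mxE Hharm ?oppr0.
by move=> t' z St' Sz Az; rewrite mxE (Hbdry t' z) ?oppr0.
Qed.

Lemma superharmonic_zero_nbr (u : 'rV[R]_n) v : u 0 v = 0 ->
  (forall z, A z v != 0 -> 0 <= u 0 z) -> 0 <= (u *m A) 0 v ->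
  (u *m A) 0 v = 0 /\ (forall z, A z v != 0 -> u 0 z = 0).
Proof.
move=> uv Hnbr hge.
have hle z : u 0 z * A z v <= 0.
  case: (eqVneq z v) => [->|zv]; first by rewrite uv mul0r.
  have [->|Anz] := eqVneq (A z v) 0; first by rewrite mulr0.
  by rewrite mulr_ge0_le0 ?Hnbr ?A_offdiag_le0.
have E : (u *m A) 0 v = \sum_z u 0 z * A z v by rewrite mxE.
have uAv : (u *m A) 0 v = 0 by apply/eqP; rewrite eq_le hge E sumr_le0.
split=> // z Az.
have hge' (z' : 'I_n) : true -> 0 <= - (u 0 z' * A z' v) by rewrite oppr_ge0.
have hsum : \sum_z - (u 0 z * A z v) = 0 by rewrite sumrN -E uAv oppr0.
have /eqP := psumr_eq0P hge' hsum (i := z) isT.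
by rewrite oppr_eq0 mulf_eq0 (negbTE Az) orbF => /eqP.
Qed.

Lemma superharmonic_zero_path (S : pred 'I_n) (u : 'rV[R]_n) (r : rel 'I_n) :
  (forall t, S t -> 0 <= (u *m A) 0 t) ->
  (forall t z, S t -> A z t != 0 -> 0 <= u 0 z) ->
  (forall a b, r a b -> A b a != 0) ->
  forall x p, path r x p -> {in x :: p, forall y, S y} -> u 0 x = 0 ->
  (u *m A) 0 (last x p) = 0.
Proof.
move=> Hharm Hnbr Hr x p hp HS ux.
suff ulast : u 0 (last x p) = 0.
  have Sl := HS _ (mem_last x p).
  by case: (superharmonic_zero_nbr ulast (Hnbr _ ^~ Sl) (Hharm _ Sl)).
elim: p x hp HS ux => [|y p IH] x //= /andP[rxy hp] HS ux.
apply: IH => // [z hz|]; first by apply: HS; rewrite inE hz orbT.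
have Sx : S x by apply: HS; rewrite mem_head.
by case: (superharmonic_zero_nbr ux (Hnbr x ^~ Sx) (Hharm x Sx)) => _; apply; apply: Hr.
Qed.

End MinimumPrinciple.

Section DualGraph.

Variables (N : nat) (prox : nat -> nat -> bool).
Hypothesis Hv : valid_prox N prox.

Lemma adjk_ltn k i j : adjk prox k i j -> (i < k)%N /\ (j < k)%N.
Proof.
elim: k i j => [|k IH] i j //=.
case: ifP => [/andP[h1 h2] _|_]; first by split; lia.
by do 2 (case: ifP => [/andP[/eqP-> h2] _|_]; first by split; lia).
Qed.

Lemma adjk_sym k i j : adjk prox k i j = adjk prox k j i.
Proof.
elim: k i j => [|k IH] i j //=.
by case: (ltngtP i k) => hi; case: (ltngtP j k) => hj //=; rewrite IH (andbC (prox k i)).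
Qed.

Lemma prox_ltn k i : (k < N)%N -> prox k i -> (i < k)%N.
Proof. by case: Hv => H _ /H; apply. Qed.

Lemma prox_adjk k i j : (k < N)%N -> i != j -> prox k i -> prox k j -> adjk prox k i j.
Proof.
case: Hv => Hlt Hc kN ij pi pj; have ik := Hlt _ _ kN pi.
by have [_ ->] := Hc k (ltac:(apply/andP; split; lia)).
Qed.

Lemma prox_exists k : (0 < k < N)%N -> exists i : 'I_N, prox k i.
Proof.
move=> hk; case: Hv => Hlt /(_ k hk) [/andP[+ _] _].
rewrite -has_count => /hasP[i ik pki].
have iN : (i < N)%N by move: ik; rewrite mem_iota; lia.
by exists (Ordinal iN).
Qed.

Definition dual K : rel 'I_N := fun x y => adjk prox K x y.

Lemma dual_sym K : symmetric (dual K).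
Proof. by move=> x y; apply: adjk_sym. Qed.

Lemma dualS_cases K (u v : 'I_N) : dual K.+1 u v ->
  [/\ (u < K)%N, (v < K)%N, dual K u v & ~~ (prox K u && prox K v)] \/
  ((u : nat) = K /\ prox K v) \/ ((v : nat) = K /\ prox K u).
Proof.
rewrite /dual /=.
case: (ltngtP u K) => hu; case: (ltngtP v K) => hv //=; rewrite ?andbF ?andbT //= => h.
- by case/andP: h => h1 h2; left; split.
- by right; right.
- by right; left.
Qed.

Definition contract K (j v : 'I_N) : 'I_N := if (v : nat) == K then j else v.

Lemma contract_old K j (v : 'I_N) : (v < K)%N -> contract K j v = v.
Proof. by move=> vK; rewrite /contract ltn_eqF. Qed.

Lemma contract_new K j (v : 'I_N) : (v : nat) = K -> contract K j v = j.
Proof. by rewrite /contract => ->; rewrite eqxx. Qed.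

Section BridgeStep.

Variable K : nat.
Hypothesis KN : (K < N)%N.
Hypothesis IH : forall x y, dual K x y -> ~~ connect (deledge (dual K) x y) x y.

Lemma dual_prox (i j : 'I_N) : i != j -> prox K i -> prox K j -> dual K i j.
Proof. exact: prox_adjk. Qed.

Lemma bridge_new_vertex (x y : 'I_N) : (x : nat) = K -> dual K.+1 x y ->
  ~~ connect (deledge (dual K.+1) x y) x y.
Proof.
move=> xK exy; apply/negP => hc.
have [yK pKy] : (y < K)%N /\ prox K y.
  case: (dualS_cases exy) => [[xK' _ _ _]|[[_ pKy]|[_ pKx]]]; first lia.
    by split; first exact: prox_ltn.
  by have := prox_ltn KN pKx; lia.
case: (pickP (fun j : 'I_N => prox K j && (j != y))) => [j /andP[pKj jy]|hnone]; last first.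
  (* x is then a leaf of dual K.+1 hanging at y *)
  case/connectP: hc => -[/= _ yx|z p /= /andP[/andP[exz hn] _] _].
    by move: yK; rewrite yx xK ltnn.
  case: (dualS_cases exz) => [[xK' _ _ _]|[[_ pz]|[_ pKx]]]; first lia; last first.
    by have := prox_ltn KN pKx; lia.
  have zy : z != y by move: hn; rewrite eqxx /= negb_or => /andP[/negbTE-> _].
  by move: (hnone z); rewrite pz zy.
pose pi := contract K j.
have Hpi u v : deledge (dual K.+1) x y u v -> connect (deledge (dual K) j y) (pi u) (pi v).
  case/andP=> euv hn; case: (dualS_cases euv) => [[uK vK euv' hb]|[[uK pv]|[vK pu]]].
  - rewrite /pi !contract_old //; apply: connect1; rewrite /deledge /= euv' /=.
    by apply: contra hb => /orP[]/andP[/eqP-> /eqP->]; rewrite ?pKj ?pKy.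
  - have ux : u = x by apply: val_inj; rewrite /= uK xK.
    have vy : v != y by move: hn; rewrite ux eqxx /= negb_or => /andP[/negbTE-> _].
    rewrite /pi (contract_new _ uK) (contract_old _ (prox_ltn KN pv)).
    case: (eqVneq j v) => [->|jv]; first exact: connect0.
    by apply: connect1; rewrite /deledge /= dual_prox // (negbTE vy) (negbTE jy) !andbF.
  - have vx : v = x by apply: val_inj; rewrite /= vK xK.
    have uy : u != y by move: hn; rewrite vx eqxx /= andbT negb_or => /andP[_ /negbTE->].
    rewrite /pi (contract_new _ vK) (contract_old _ (prox_ltn KN pu)).
    case: (eqVneq u j) => [->|uj]; first exact: connect0.
    by apply: connect1; rewrite /deledge /= dual_prox // (negbTE uy) (negbTE jy) !andbF.
have := connect_map Hpi hc; rewrite /pi (contract_new _ xK) (contract_old _ yK).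
exact/negP/IH/dual_prox.
Qed.

Lemma bridge_old_edge (x y : 'I_N) : (x < K)%N -> (y < K)%N -> dual K.+1 x y ->
  ~~ connect (deledge (dual K.+1) x y) x y.
Proof.
move=> xK yK exy; apply/negP => hc.
have [exy' hb] : dual K x y /\ ~~ (prox K x && prox K y).
  by case: (dualS_cases exy) => [[]|[[xK' _]|[yK' _]]] //; lia.
have [i pKi] : exists i : 'I_N, prox K i by apply: prox_exists; lia.
pose pi := contract K i.
have Hpi u v : deledge (dual K.+1) x y u v -> connect (deledge (dual K) x y) (pi u) (pi v).
  case/andP=> euv hn; case: (dualS_cases euv) => [[uK vK euv' _]|[[uK pv]|[vK pu]]].
  - by rewrite /pi !contract_old //; apply: connect1; rewrite /deledge /= euv'.
  - rewrite /pi (contract_new _ uK) (contract_old _ (prox_ltn KN pv)).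
    case: (eqVneq i v) => [->|iv]; first exact: connect0.
    apply: connect1; rewrite /deledge /= dual_prox //.
    by apply: contra hb => /orP[]/andP[/eqP<- /eqP<-]; rewrite ?pKi ?pv.
  - rewrite /pi (contract_new _ vK) (contract_old _ (prox_ltn KN pu)).
    case: (eqVneq u i) => [->|ui]; first exact: connect0.
    apply: connect1; rewrite /deledge /= dual_prox //.
    by apply: contra hb => /orP[]/andP[/eqP<- /eqP<-]; rewrite ?pKi ?pu.
have := connect_map Hpi hc; rewrite /pi !contract_old //.
exact/negP/IH.
Qed.

End BridgeStep.

Lemma dual_bridge K : (K <= N)%N ->
  forall x y, dual K x y -> ~~ connect (deledge (dual K) x y) x y.
Proof.
elim: K => [|K IHK] KN x y //; have {}IHK := IHK (ltnW KN).
case: (eqVneq (x : nat) K) => [xK|xK]; first exact: bridge_new_vertex.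
case: (eqVneq (y : nat) K) => [yK|yK] exy.
  rewrite connect_deledge_swap; last exact: dual_sym.
  by apply: bridge_new_vertex => //; rewrite dual_sym.
have [hx hy] := adjk_ltn exy.
by apply: bridge_old_edge; rewrite // ltn_neqAle -ltnS ?xK ?yK.
Qed.

Lemma gadj_sym : symmetric (@gadj N prox).
Proof. exact: dual_sym. Qed.

Lemma gadj_bridge (x y : 'I_N) : gadj prox x y -> ~~ connect (deledge (gadj prox) x y) x y.
Proof. exact: dual_bridge. Qed.

Lemma onpath_separates (x y v : 'I_N) : onpath (gadj prox) x y v -> v != x ->
  ~~ connect (avoid (gadj prox) v) x y.
Proof.
case=> p /and4P[hp /eqP hl hu hv] vx; case: (eqVneq v y) => [vy|vy].
  by apply/negP; rewrite vy => /connect_avoid_to xy; move: vx; rewrite vy xy eqxx.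
rewrite -hl (path_separates gadj_sym gadj_bridge) // ?hl //.
by move: hv; rewrite inE (negbTE vx).
Qed.

End DualGraph.

Section Valuation.

Variables (N : nat) (prox : nat -> nat -> bool).
Hypothesis Hv : valid_prox N prox.

Local Notation P := (proxmx N prox).
Local Notation A := ((proxmx N prox)^T *m proxmx N prox).
Local Notation V := (valmx N prox).

Definition proxe (k x : nat) : rat := if k == x then 1 else if prox k x then -1 else 0.

Lemma proxmxE (i j : 'I_N) : P i j = proxe i j.
Proof. by rewrite mxE. Qed.

Lemma proxe_gt k x : (k < N)%N -> (k < x)%N -> proxe k x = 0.
Proof.
move=> kN kx; rewrite /proxe ltn_eqF //.
by case: ifP => // /(prox_ltn Hv kN) xk; have := ltn_trans kx xk; rewrite ltnn.
Qed.

Lemma sum_proxe K x y : (K <= N)%N -> x != y ->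
  \sum_(k < K) proxe k x * proxe k y = - (adjk prox K x y)%:R.
Proof.
elim: K => [|K IH] KN xy; first by rewrite big_ord0 oppr0.
rewrite big_ord_recr /= IH ?(ltnW KN) //.
have old_gt z w : (K <= z)%N -> adjk prox K z w = false /\ adjk prox K w z = false.
  by move=> Kz; split; apply/negP => /adjk_ltn; lia.
case: (ltngtP x K) => hx; case: (ltngtP y K) => hy /=.
- rewrite /proxe !gtn_eqF //.
  case px: (prox K x); case py: (prox K y) => /=; rewrite ?andbF ?andbT ?mulr0 ?mul0r ?addr0 //.
  by rewrite (prox_adjk Hv) //= mulrNN mulr1 addNr.
- by rewrite (proxe_gt KN hy) mulr0 addr0 (old_gt y x (ltnW hy)).2.
- rewrite hy /proxe eqxx gtn_eqF // mulr1 (old_gt K x (leqnn K)).2.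
  by case: (prox K x); rewrite /= ?oppr0 ?add0r.
- by rewrite (proxe_gt KN hx) mul0r addr0 (old_gt x y (ltnW hx)).1.
- by rewrite (proxe_gt KN hx) mul0r addr0 (old_gt x y (ltnW hx)).1.
- by rewrite (proxe_gt KN hx) mul0r addr0 (old_gt x y (ltnW hx)).1.
- rewrite hx /proxe eqxx gtn_eqF // mul1r (old_gt K y (leqnn K)).1.
  by case: (prox K y); rewrite /= ?oppr0 ?add0r ?ltnn.
- by rewrite (proxe_gt KN hy) mulr0 addr0 (old_gt y x (ltnW hy)).2.
- by move: xy; rewrite hx hy eqxx.
Qed.

Lemma intmx_offdiag (x y : 'I_N) : x != y -> A x y = - (gadj prox x y)%:R.
Proof.
move=> xy; rewrite -(sum_proxe (leqnn N)) // mxE.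
by apply: eq_bigr => k _; rewrite mxE !proxmxE.
Qed.

Lemma proxmx_unit : P \in unitmx.
Proof.
rewrite unitmxE det_trig; last first.
  by apply/is_trig_mxP => i j ij; rewrite proxmxE proxe_gt.
rewrite (eq_bigr (fun _ => 1)) ?prodr_const ?expr1n ?unitr1 // => i _.
by rewrite proxmxE /proxe eqxx.
Qed.

Lemma valmx_mulmx : V *m A = 1%:M.
Proof. by rewrite /valmx mulVmx // unitmx_mul unitmx_tr proxmx_unit. Qed.

Lemma intmx_offdiag_le0 (x y : 'I_N) : x != y -> A x y <= 0.
Proof. by move=> xy; rewrite intmx_offdiag // oppr_le0 ler0n. Qed.

Lemma intmx_neq0 (x y : 'I_N) : x != y -> (A x y != 0) = gadj prox x y.
Proof. by move=> xy; rewrite intmx_offdiag //; case: gadj; rewrite ?oppr_eq0 ?oner_eq0 ?eqxx. Qed.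

Lemma intmx_adj (x y : 'I_N) : gadj prox x y -> A x y != 0.
Proof. by move=> exy; rewrite intmx_neq0 // (forest_neq (gadj_bridge Hv) exy). Qed.

Lemma intmx_posdef (u : 'rV[rat]_N) : \sum_v u 0 v * (u *m A) 0 v <= 0 -> u = 0.
Proof.
set m := u *m P^T => hle.
have E : \sum_v u 0 v * (u *m A) 0 v = \sum_t m 0 t * m 0 t.
  transitivity ((u *m A *m u^T) 0 0).
    by rewrite mxE; apply: eq_bigr => v _; rewrite [u^T _ _]mxE mulrC.
  have -> : u *m A *m u^T = m *m m^T by rewrite /m trmx_mul trmxK !mulmxA.
  by rewrite mxE; apply: eq_bigr => t _; rewrite [m^T _ _]mxE.
have sq_ge0 (t : 'I_N) : true -> 0 <= m 0 t * m 0 t by rewrite -expr2 sqr_ge0.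
have m0 : m = 0.
  have h0 : \sum_t m 0 t * m 0 t = 0 by apply/eqP; rewrite eq_le -E hle E sumr_ge0.
  apply/matrixP => i t; rewrite (ord1 i) [RHS]mxE.
  by have /eqP := psumr_eq0P sq_ge0 h0 (i := t) erefl; rewrite mulf_eq0 orbb => /eqP.
by rewrite -[u](mulmxK (_ : P^T \in unitmx)) -/m ?m0 ?mul0mx // unitmx_tr proxmx_unit.
Qed.

Local Notation Q := (invmx (proxmx N prox)).

Lemma invmx_proxmx_rec (k j : 'I_N) :
  Q k j = (k == j)%:R + \sum_(i | i != k) (prox k i)%:R * Q i j.
Proof.
have := congr1 (fun M : 'M[rat]_N => M k j) (mulmxV proxmx_unit).
rewrite !mxE (bigD1 k) //= proxmxE /proxe eqxx mul1r => <-.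
rewrite -addrA -big_split big1 ?addr0 //= => i ik; rewrite proxmxE /proxe ifN_eqC //.
by case: (prox k i); rewrite ?mulN1r ?mul1r ?addNr ?mul0r ?addr0.
Qed.

(* Induction on k: every k > 0 is proximate to an earlier point, through which
   positivity of the first column propagates. *)
Lemma invmx_proxmx_pos (j0 : 'I_N) : (j0 : nat) = 0%N ->
  forall k, (forall j, 0 <= Q k j) /\ 0 < Q k j0.
Proof.
move=> hj0; suff H n (k : 'I_N) : (k < n)%N -> (forall j, 0 <= Q k j) /\ 0 < Q k j0.
  by move=> k; apply: (H N).
elim: n k => [|n IH] k // kn.
have prox_term (j i : 'I_N) : 0 <= (prox k i)%:R * Q i j.
  case pki: (prox k i); last by rewrite mul0r.
  by rewrite mul1r; have [] := IH i ltac:(have := prox_ltn Hv (ltn_ord k) pki; lia).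
have Hsum j : 0 <= \sum_(i | i != k) (prox k i)%:R * Q i j by apply: sumr_ge0 => i _.
split=> [j|]; rewrite invmx_proxmx_rec; first by rewrite addr_ge0 ?ler0n.
case: (eqVneq k j0) => [_|kj0]; first by rewrite ltr_pwDl.
rewrite add0r; have [i pki] : exists i : 'I_N, prox k i.
  apply: prox_exists => //; rewrite ltn_ord andbT lt0n.
  by apply: contra kj0 => /eqP k0; apply/eqP/val_inj; rewrite /= k0 hj0.
have ik : i != k.
  by apply: contraTneq pki => ->; apply/negP => /(prox_ltn Hv (ltn_ord k)); rewrite ltnn.
rewrite (bigD1 i) //= pki mul1r ltr_pwDl //; last by apply: sumr_ge0 => ? _.
by have [] := IH i ltac:(have := prox_ltn Hv (ltn_ord k) pki; lia).
Qed.

Lemma valmxE : V = Q *m Q^T.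
Proof.
have hQ : Q *m Q^T *m A = 1%:M.
  rewrite -!mulmxA (mulmxA Q^T) -trmx_mul mulmxV ?proxmx_unit //.
  by rewrite trmx1 mul1mx mulVmx ?proxmx_unit.
rewrite /valmx -[RHS](mulmxK (_ : A \in unitmx)) ?hQ ?mul1mx //.
by rewrite unitmx_mul unitmx_tr proxmx_unit.
Qed.

Lemma valmx_gt0 (x y : 'I_N) : 0 < V x y.
Proof.
have j0N : (0 < N)%N by apply: leq_ltn_trans (ltn_ord x).
pose j0 := Ordinal j0N; have Qpos := invmx_proxmx_pos (erefl : (j0 : nat) = 0%N).
have Qge k j := (Qpos k).1 j; have Qgt k := (Qpos k).2.
rewrite valmxE mxE (bigD1 j0) //= mxE ltr_pwDl ?mulr_gt0 ?Qgt //.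
by apply: sumr_ge0 => k _; rewrite mxE mulr_ge0 ?Qge.
Qed.

End Valuation.

Section Potential.

Variables (N : nat) (prox : nat -> nat -> bool).
Hypothesis Hv : valid_prox N prox.
Variables mu g eta : 'I_N.

Local Notation e := (@gadj N prox).
Local Notation A := ((proxmx N prox)^T *m proxmx N prox).
Local Notation V := (valmx N prox).
Local Notation w := (rhat (valmx N prox) mu g *m valmx N prox).
Local Notation c := (rho (valmx N prox) mu g mu).
Local Notation f := (phi (valmx N prox) mu g eta).

Let Aoff := intmx_offdiag_le0 Hv.
Let Apd := intmx_posdef Hv.

Lemma rho_gt0 : 0 < c.
Proof. by rewrite divr_gt0 ?valmx_gt0. Qed.

Lemma rhatV_mulmx t : (w *m A) 0 t = (t == g)%:R - c * (t == mu)%:R.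
Proof. by rewrite -mulmxA valmx_mulmx // mulmx1 mxE. Qed.

Lemma rhatV_mu : w 0 mu = 0.
Proof.
have delta (x : 'I_N) F : \sum_i (i == x)%:R * F i = F x :> rat.
  by rewrite (bigD1 x) //= eqxx mul1r big1 ?addr0 // => i /negbTE->; rewrite mul0r.
rewrite mxE; under eq_bigr => i _ do rewrite mxE mulrBl -mulrA.
by rewrite sumrB -mulr_sumr !delta divfK ?subrr // lt0r_neq0 ?valmx_gt0.
Qed.

Lemma branch_neq_mu v : branch e mu g v -> v != mu.
Proof.
by case/andP=> gm; apply: contraTneq => ->; apply/negP => /connect_avoid_to/eqP; apply/negP.
Qed.

Lemma rhatV_off_branch t : ~~ branch e mu g t -> w 0 t = 0.
Proof.
move=> nbt; case: (eqVneq t mu) => [->|tm]; first exact: rhatV_mu.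
pose S := [pred v | (v != mu) && ~~ branch e mu g v].
apply: (harmonic_eq0 Aoff Apd (S := S)); last by rewrite /S /= tm.
  move=> t' /andP[t'm nbt']; rewrite rhatV_mulmx (negbTE t'm) mulr0 subr0.
  have t'g : t' != g by apply: contraNneq nbt' => t'g; rewrite /branch -t'g t'm connect0.
  by rewrite (negbTE t'g).
move=> t' z /andP[t'm nbt'] Sz Az; case: (eqVneq z mu) => [->|zm]; first exact: rhatV_mu.
have bz : branch e mu g z by move: Sz; rewrite /S /= zm negbK.
have zt : z != t' by apply: contraNneq nbt' => <-.
have ezt : e z t' by rewrite -intmx_neq0.
case/andP: bz nbt' => gm hgz; rewrite /branch gm /= => /negP; case.
by apply: connect_trans hgz (connect1 _); rewrite /= ezt zm.
Qed.

Lemma avoid_intmx_neq0 x a b : avoid e x a b -> A b a != 0.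
Proof. by case/and3P=> eab _ _; rewrite intmx_adj // gadj_sym. Qed.

Lemma intmx_boundary a b t z : b != a -> connect (avoid e a) b t ->
  ~~ connect (avoid e a) b z -> A z t != 0 -> z = a.
Proof.
move=> ba hbt hbz Azt; have zt : z != t by apply: contraNneq hbz => ->.
by apply: connect_avoid_boundary ba hbt hbz _; rewrite gadj_sym -intmx_neq0.
Qed.

Lemma rhatV_mulmx_branch_ge0 t : branch e mu g t -> 0 <= (w *m A) 0 t.
Proof. by move=> bt; rewrite rhatV_mulmx (negbTE (branch_neq_mu bt)) mulr0 subr0 ler0n. Qed.

Lemma rhatV_ge0 t : 0 <= w 0 t.
Proof.
case bt: (branch e mu g t); last by rewrite rhatV_off_branch ?bt.
apply: (superharmonic_ge0 Aoff Apd rhatV_mulmx_branch_ge0) bt => t' z _ bz _.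
by rewrite rhatV_off_branch.
Qed.

(* A zero of w inside the branch would propagate along a path to g, where w A = 1. *)
Lemma rhatV_gt0 t : branch e mu g t -> 0 < w 0 t.
Proof.
move=> bt; rewrite lt_def rhatV_ge0 andbT; apply/eqP => wt0.
case/andP: (bt) => gm hgt; rewrite (connect_avoid_sym (@gadj_sym N prox)) in hgt.
case/connectP: hgt => p hp hl.
have Hp : {in t :: p, forall y, branch e mu g y}.
  move=> y hy; rewrite /branch gm /=; case/andP: bt => _ hgt.
  exact: connect_trans hgt (path_connect hp hy).
have := superharmonic_zero_path Aoff rhatV_mulmx_branch_ge0 (fun _ z _ _ => rhatV_ge0 z)
  (@avoid_intmx_neq0 mu) hp Hp wt0.
by rewrite -hl rhatV_mulmx eqxx (negbTE gm) mulr0 subr0 => /eqP; rewrite oner_eq0.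
Qed.

Lemma phi_ge0 t : 0 <= f t.
Proof. by rewrite divr_ge0 ?rhatV_ge0 // ltW ?valmx_gt0. Qed.

Lemma gap_entry k t : (k *: row eta V - w) 0 t = (k - f t) * V eta t.
Proof. by rewrite /phi !mxE mulrBl divfK // lt0r_neq0 ?valmx_gt0. Qed.

Lemma gap_mulmx k t :
  ((k *: row eta V - w) *m A) 0 t = k * (eta == t)%:R + c * (t == mu)%:R - (t == g)%:R.
Proof.
have subE (X Y : 'rV[rat]_N) : (X - Y) 0 t = X 0 t - Y 0 t by rewrite !mxE.
rewrite mulmxBl subE rhatV_mulmx -scalemxAl -row_mul valmx_mulmx // !mxE.
by rewrite opprB addrA.
Qed.

Lemma phi_lt nu nu' : nu' != mu -> ~~ connect (avoid e nu') mu g ->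
  connect (avoid e nu') mu nu -> f nu < f nu'.
Proof.
move=> nm hg hnu; set k := f nu'; set u := k *: row eta V - w.
pose D := connect (avoid e nu') mu.
have mn : mu != nu' by rewrite eq_sym.
have uA_ge0 t : D t -> 0 <= (u *m A) 0 t.
  move=> Dt; have tg : t != g by apply: contraNneq hg => <-.
  rewrite gap_mulmx (negbTE tg) subr0; apply: addr_ge0; apply: mulr_ge0;
    by rewrite ?ler0n ?phi_ge0 ?ltW ?rho_gt0.
have u_nu' : u 0 nu' = 0 by rewrite gap_entry subrr mul0r.
have u_bdry t z : D t -> ~~ D z -> A z t != 0 -> 0 <= u 0 z.
  by move=> Dt Dz Azt; rewrite (intmx_boundary mn Dt Dz Azt) u_nu'.
have u_ge0 := superharmonic_ge0 Aoff Apd uA_ge0 u_bdry.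
have u_nbr t z : D t -> A z t != 0 -> 0 <= u 0 z.
  by move=> Dt; case Dz: (D z); [rewrite u_ge0 | apply: u_bdry; rewrite ?Dz].
suff : 0 < u 0 nu by rewrite gap_entry pmulr_lgt0 ?valmx_gt0 // subr_gt0.
rewrite lt_def u_ge0 // andbT; apply/eqP => u0.
move: (hnu); rewrite (connect_avoid_sym (@gadj_sym N prox)) => /connectP[p hp hl].
have Hp : {in nu :: p, forall y, D y} by move=> y hy; apply: connect_trans hnu (path_connect hp hy).
have mg : mu != g by apply: contraNneq hg => <-; exact: connect0.
have := superharmonic_zero_path Aoff uA_ge0 u_nbr (@avoid_intmx_neq0 nu') hp Hp u0.
rewrite -hl gap_mulmx eqxx (negbTE mg) subr0 mulr1.
have : 0 <= k * (eta == mu)%:R by rewrite mulr_ge0 ?ler0n ?phi_ge0.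
by have := rho_gt0; lra.
Qed.

Lemma phi_edge a b : e a b ->
  (forall v, connect (avoid e a) b v -> [&& v != mu, v != g & v != eta]) -> f a = f b.
Proof.
move=> eab Hside; have ba : b != a by rewrite eq_sym (forest_neq (gadj_bridge Hv) eab).
set u := f a *: row eta V - w.
have uA0 t : connect (avoid e a) b t -> (u *m A) 0 t = 0.
  case/Hside/and3P=> tm tg te.
  by rewrite gap_mulmx (negbTE tm) (negbTE tg) eq_sym (negbTE te) !mulr0 !addr0.
have u_bdry t z : connect (avoid e a) b t -> ~~ connect (avoid e a) b z -> A z t != 0 -> u 0 z = 0.
  by move=> ht hz Azt; rewrite (intmx_boundary ba ht hz Azt) gap_entry subrr mul0r.
have := harmonic_eq0 Aoff Apd uA0 u_bdry (connect0 _ b).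
by rewrite gap_entry => /eqP; rewrite mulf_eq0 (gt_eqF (valmx_gt0 Hv eta b)) orbF subr_eq0 => /eqP.
Qed.

Lemma phi_edge_off_path q a b : path e mu q -> last mu q = g -> uniq (mu :: q) ->
  eta \in mu :: q -> e a b -> ~~ ((a \in mu :: q) && (b \in mu :: q)) -> f a = f b.
Proof.
move=> hp hl hu he eab hab.
have off_path v : v \notin mu :: q -> [&& v != mu, v != g & v != eta].
  move=> hv; apply/and3P; split; apply: contraNneq hv => ->; rewrite ?mem_head //.
  by rewrite -hl mem_last.
case: (edge_off_path_side (@gadj_sym N prox) (gadj_bridge Hv) hp hu eab hab) => Hside.
  by apply: phi_edge => // v /Hside /off_path.
by symmetry; apply: phi_edge => [|v /Hside /off_path //]; rewrite gadj_sym.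
Qed.

End Potential.

Unset Implicit Arguments. Set Strict Implicit.

Theorem mainTheorem11 (N : nat) (prox : nat -> nat -> bool)
  (Hprox : valid_prox N prox) (mu g eta : 'I_N) :
  let V := @valmx N prox in
  let e := @gadj N prox in
  let f := phi V mu g eta in
  (forall nu, 0 <= f nu) /\
  (forall nu, 0 < f nu <-> branch e mu g nu) /\
  (forall nu nu', onpath e mu g nu -> onpath e mu g nu' ->
     (gdist e mu nu < gdist e mu nu')%N -> f nu < f nu') /\
  (onpath e mu g eta ->
     forall (x : 'I_N) (p : seq 'I_N), path e x p -> uniq (x :: p) ->
       (forall u w, u \in x :: p -> w \in x :: p ->
          onpath e mu g u -> onpath e mu g w -> u = w) ->
       forall a b, a \in x :: p -> b \in x :: p -> f a = f b).
Proof.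
move=> V e f; split; first exact: phi_ge0.
split=> [nu|].
  split=> [|bnu]; last by rewrite divr_gt0 ?rhatV_gt0 ?valmx_gt0.
  by apply: contraTT => nbnu; rewrite /f /phi rhatV_off_branch // mul0r ltxx.
split=> [nu nu' [q /and4P[hp _ hu hn]] on_nu' hd|].
  have nu'mu : nu' != mu by apply: contraTneq hd => ->; rewrite gdist_self.
  apply: phi_lt => //; first exact: onpath_separates.
  exact: gdist_lt_connect_avoid hp hu hn hd.
case=> q /and4P[hp /eqP hl hu he] x p hpx hux Hone a b ha hb.
have Hedge u v : e u v -> ~ (onpath e mu g u /\ onpath e mu g v) -> f u = f v.
  move=> euv Huv; apply: (phi_edge_off_path Hprox hp hl hu he euv).
  by apply/negP => /andP[hu' hv']; apply: Huv; split; exists q; rewrite hp hl eqxx hu.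
by rewrite (path_const Hedge hpx hux Hone ha) (path_const Hedge hpx hux Hone hb).
Qed.
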